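(* In the dynamic oligopoly model of the context with $\delta>1/2$ and $M(s)=\sum_{x\ge0}k(x)s(x)$, where $k\ge0$ is increasing and $k(x)\le C_kx^{p_k}$ for constants $C_k>0$, $p_k\ge0$: for every $m$ and every policy $g(\cdot,m):X\to A$, the Markov chain with kernel $W(x,g(x,m),\cdot)$ is irreducible, aperiodic and positive recurrent, hence has a unique invariant distribution $s^{m,g}$, and all moments of $s^{m,g}$ are bounded uniformly over $m$ and $g$. Consequently, with $a=0$, $d(x,y)=|x-y|$, $x_0=0$ and $p=2$, there exists $b>0$ such that for every $m\in[0,b]$ and policy $g$: $s^{m,g}$ is unique, $M(s^{0,g})\ge0$, $M(s^{b,g})\le b$, and $\sum_x x^2 s^{m,g}(x)\le C$ for a constant $C<\infty$ independent of $m$ and $g$.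
   Context: Dynamic oligopoly model. States $X=\{0,1,2,\dots\}$; actions $A=[\underline a,1]$ with $0<\underline a<1$. For $x\ge1$: $W(x,a,x+1)=\frac{(1-\delta)a}{1+a}$, $W(x,a,x)=\frac{1-\delta+\delta a}{1+a}$, $W(x,a,x-1)=\frac{\delta}{1+a}$, $W(x,a,y)=0$ otherwise; $W(0,a,1)=\frac{(1-\delta)a}{1+a}$, $W(0,a,0)=1-W(0,a,1)$; $\delta\in(0,1)$. A policy is any map $x\mapsto g(x,m)\in A$. *)

From HB Require Import structures.
From mathcomp Require Import all_boot all_order all_algebra.
From mathcomp Require Import all_classical all_reals all_analysis.
Set Implicit Arguments. Unset Strict Implicit. Unset Printing Implicit Defensive.
Import Order.TTheory GRing.Theory Num.Theory.
Local Open Scope ring_scope.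

Section Model.
Variable R : realType.

Definition W (delta : R) (x : nat) (a : R) (y : nat) : R :=
  if x == 0%N then
    (if y == 1%N then (1 - delta) * a / (1 + a)
     else if y == 0%N then 1 - (1 - delta) * a / (1 + a) else 0)
  else if y == x.+1 then (1 - delta) * a / (1 + a)
  else if y == x then (1 - delta + delta * a) / (1 + a)
  else if y == x.-1 then delta / (1 + a)
  else 0.

Local Open Scope ereal_scope.

Fixpoint nstep (P : nat -> nat -> R) (n : nat) (x y : nat) : \bar R :=
  match n with
  | 0%N => (if x == y then 1 else 0)%:E
  | n'.+1 => \sum_(z <oo) ((P x z)%:E * nstep P n' z y)
  end.

(* first-passage probabilities f^n(x,y) = P_x(tau_y = n), tau_y = inf{n >= 1 : X_n = y} *)
Fixpoint fpass (P : nat -> nat -> R) (n : nat) (x y : nat) : \bar R :=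
  match n with
  | 0%N => 0
  | n'.+1 =>
    match n' with
    | 0%N => (P x y)%:E
    | _ => \sum_(z <oo | z != y) ((P x z)%:E * fpass P n' z y)
    end
  end.

Definition irreducible (P : nat -> nat -> R) : Prop :=
  forall x y, exists n, 0 < nstep P n x y.

Definition aperiodic (P : nat -> nat -> R) : Prop :=
  forall x (d : nat),
    (forall n, (0 < n)%N -> 0 < nstep P n x x -> (d %| n)%N) -> d = 1%N.

Definition positive_recurrent (P : nat -> nat -> R) : Prop :=
  forall x,
    \sum_(1 <= n <oo) fpass P n x x = 1 /\
    \sum_(1 <= n <oo) ((n%:R)%:E * fpass P n x x) < +oo.

Definition invariant_distribution (P : nat -> nat -> R) (s : nat -> R) : Prop :=
  (forall x, (0 <= s x)%R) /\
  \sum_(x <oo) (s x)%:E = 1 /\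
  forall y, \sum_(x <oo) (s x * P x y)%:E = (s y)%:E.

Definition unique_invariant_distribution (P : nat -> nat -> R) : Prop :=
  exists s, invariant_distribution P s /\
    forall s', invariant_distribution P s' -> s' = s.

Definition Mfun (k : nat -> R) (s : nat -> R) : \bar R :=
  \sum_(x <oo) (k x * s x)%:E.

Definition Pol (delta : R) (g : nat -> R -> R) (m : R) : nat -> nat -> R :=
  fun x y => W delta x (g x m) y.

End Model.

From HB Require Import structures.
From mathcomp Require Import all_boot all_order all_algebra.
From mathcomp Require Import all_classical all_reals all_analysis.
From mathcomp Require Import ring lra zify.
Import Order.TTheory GRing.Theory Num.Theory.
Set Implicit Arguments. Unset Strict Implicit.
Local Open Scope ring_scope.

(* Under every policy the chain is a birth-death chain on [nat] whose up-, stay-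
   and down-probabilities are bounded away from 0 uniformly in the action, so it
   is irreducible and aperiodic.  As [delta > 1/2], the down-probability beats the
   up-probability by at least [delta - 1/2], and a Lyapunov function (geometric
   below the target state, linear above it) bounds the expected return times.
   Detailed balance gives the invariant distribution explicitly: its weights are
   products of ratios [pup / pdown <= rho = (1 - delta) / delta < 1], so it is
   unique and dominated by [rho ^ x] uniformly in the policy.  Hence all its
   moments, and [M(s)] since [k] grows polynomially, are bounded by those of the
   geometric weights, and [b] can be taken above the bound on [M]. *)

Section ExtendedSeries.
Variable R : realType.
Local Open Scope ereal_scope.

Lemma eseries_cond_trunc (f : nat -> \bar R) (P : pred nat) m N :
  (m <= N)%N -> (forall i, (N <= i)%N -> P i -> f i = 0) ->
  \sum_(m <= i <oo | P i) f i = \sum_(m <= i < N | P i) f i.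
Proof.
move=> mN f0; apply: lim_near_cst => //; near=> n.
have Nn : (N <= n)%N by near: n; exists N.
rewrite (@big_cat_nat _ _ _ N) // /= [X in _ + X](_ : _ = 0) ?adde0 //.
by rewrite big_nat_cond big1 // => i /andP[/andP[/f0 + _] Pi]; apply.
Unshelve. all: by end_near. Qed.

Lemma nneseries_cond_le (f : nat -> \bar R) (P : pred nat) m C :
  (forall i, (m <= i)%N -> P i -> 0 <= f i) ->
  (forall N, \sum_(m <= i < N | P i) f i <= C) ->
  \sum_(m <= i <oo | P i) f i <= C.
Proof.
by move=> f0 hC; apply: lime_le; [exact: is_cvg_nneseries | apply: nearW].
Qed.

End ExtendedSeries.

Lemma bigD1_ord_nat (V : nmodType) (F : nat -> V) N y : ((N <= y)%N -> F y = 0) ->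
  \sum_(z < N) F z = F y + \sum_(z < N | (z : nat) != y) F z.
Proof.
case: (ltnP y N) => h F0; first by rewrite (bigD1 (Ordinal h)).
rewrite F0 // add0r; apply: eq_bigl => i; symmetry; apply/eqP => E.
by have := ltn_ord i; rewrite E; lia.
Qed.

Section Estimates.
Variable R : realType.
Implicit Type r : R.

Lemma geometric_sum_le r N : 0 <= r -> r < 1 ->
  \sum_(0 <= x < N) r ^+ x <= (1 - r)^-1.
Proof.
move=> r0 r1.
have telescope : \sum_(0 <= x < N) r ^+ x * (1 - r) = 1 - r ^+ N.
  elim: N => [|N IH]; first by rewrite big_geq // expr0 subrr.
  by rewrite big_nat_recr //= IH exprSr; ring.
rewrite -div1r ler_pdivlMr ?subr_gt0 // mulr_suml telescope.
by rewrite lerBlDr lerDl exprn_ge0.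
Qed.

Lemma natr_mul_expr_le r x : 0 <= r -> r < 1 -> x%:R * r ^+ x <= (1 - r)^-1.
Proof.
move=> r0 r1.
have bernoulli y : r ^+ y * (1 + y%:R * (1 - r)) <= 1.
  elim: y => [|y IH]; first by rewrite expr0 mul0r addr0 mul1r.
  have rSy_le1 : r ^+ y.+1 <= 1 by apply: exprn_ile1 => //; apply: ltW.
  have -> : r ^+ y.+1 * (1 + y.+1%:R * (1 - r)) =
            r * (r ^+ y * (1 + y%:R * (1 - r))) + r ^+ y.+1 * (1 - r).
    by rewrite exprS -addn1 natrD; ring.
  have : r * (r ^+ y * (1 + y%:R * (1 - r))) <= r by rewrite ler_piMr.
  have : r ^+ y.+1 * (1 - r) <= 1 - r by rewrite ler_piMl // subr_ge0 ltW.
  lra.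
rewrite -div1r ler_pdivlMr ?subr_gt0 //.
have := bernoulli x; have := exprn_ge0 x r0; nra.
Qed.

Lemma expr_sqrtr r x : 0 <= r -> r ^+ x = Num.sqrt r ^+ x * Num.sqrt r ^+ x.
Proof. by move=> r0; rewrite -exprMn -expr2 sqr_sqrtr. Qed.

Lemma sqrtr_lt1 r : 0 <= r -> r < 1 -> Num.sqrt r < 1.
Proof. by move=> r0 r1; rewrite -sqrtr1 ltr_sqrt. Qed.

(* Split [r^x] as [sqrt r ^ x * sqrt r ^ x] and spend one factor per power of [x]. *)
Lemma natr_expr_geometric_bounded q r : 0 <= r -> r < 1 ->
  exists K, 0 <= K /\ forall x, x%:R ^+ q * r ^+ x <= K.
Proof.
elim: q r => [|q IH] r r0 r1.
  by exists 1; split => // x; rewrite expr0 mul1r exprn_ile1 // ltW.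
have s0 := sqrtr_ge0 r; have s1 := sqrtr_lt1 r0 r1.
have [K [K0 hK]] := IH _ s0 s1.
exists (K * (1 - Num.sqrt r)^-1); split.
  by rewrite mulr_ge0 // invr_ge0 subr_ge0 ltW.
move=> x; rewrite (expr_sqrtr x r0).
have -> : x%:R ^+ q.+1 * (Num.sqrt r ^+ x * Num.sqrt r ^+ x) =
  (x%:R ^+ q * Num.sqrt r ^+ x) * (x%:R * Num.sqrt r ^+ x) by rewrite exprS; ring.
by apply: ler_pM; rewrite ?mulr_ge0 ?exprn_ge0 ?hK ?natr_mul_expr_le.
Qed.

Lemma geometric_moment_bounded q r : 0 <= r -> r < 1 ->
  exists C, forall N, \sum_(0 <= x < N) x%:R ^+ q * r ^+ x <= C.
Proof.
move=> r0 r1; have s0 := sqrtr_ge0 r; have s1 := sqrtr_lt1 r0 r1.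
have [K [K0 hK]] := natr_expr_geometric_bounded q s0 s1.
exists (K * (1 - Num.sqrt r)^-1) => N.
apply: le_trans (_ : \sum_(0 <= x < N) K * Num.sqrt r ^+ x <= _).
  apply: ler_sum_nat => i _; rewrite (expr_sqrtr i r0) mulrA.
  by apply: ler_wpM2r; rewrite ?exprn_ge0 ?hK.
by rewrite -mulr_sumr ler_wpM2l // geometric_sum_le.
Qed.

Lemma ge1_of_ge_1_sub_divn r B : (forall N : nat, 1 - B / N.+1%:R <= r) -> 1 <= r.
Proof.
move=> h; rewrite leNgt; apply/negP => hr.
have hN := truncnS_gt (B / (1 - r)); set N := Num.truncn _ in hN.
rewrite ltr_pdivrMr ?subr_gt0 // in hN.
have : B / N.+1%:R < 1 - r by rewrite ltr_pdivrMr ?ltr0n // mulrC.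
by have := h N; move: (B / _) => t; lra.
Qed.

Lemma nneseries_le_geometric (f s : nat -> R) r C :
  (forall x, 0 <= f x) -> (forall x, 0 <= s x <= r ^+ x) ->
  (forall N, \sum_(0 <= x < N) f x * r ^+ x <= C) ->
  (\sum_(x <oo) (f x * s x)%:E <= C%:E)%E.
Proof.
move=> f_ge0 s_le hC.
apply: nneseries_cond_le => [x _ _|N].
  by case/andP: (s_le x) => s_ge0 _; rewrite lee_fin mulr_ge0.
rewrite sumEFin lee_fin; apply: le_trans (hC N).
by apply: ler_sum_nat => x _; rewrite ler_wpM2l //; case/andP: (s_le x).
Qed.

Lemma natr_powR_le_1_add_expr (p : R) (n x : nat) :
  0 <= p -> p <= n%:R -> x%:R `^ p <= 1 + x%:R ^+ n.
Proof.
move=> p0 pn; case: x => [|x].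
  have [->|p_neq0] := eqVneq p 0; first by rewrite powRr0 lerDl exprn_ge0.
  by rewrite powR0 // addr_ge0 ?exprn_ge0.
apply: le_trans (_ : x.+1%:R `^ n%:R <= _); first by rewrite ler_powR ?ler1n.
by rewrite powR_mulrn ?ler0n // lerDr.
Qed.

End Estimates.

Section Model.
Variables (R : realType) (delta abar : R).
Hypotheses (delta_gt_half : 1 / 2 < delta) (delta_lt1 : delta < 1).
Hypotheses (abar_gt0 : 0 < abar) (abar_lt1 : abar < 1).

Lemma delta_gt0 : 0 < delta.
Proof. exact: lt_trans delta_gt_half. Qed.

Definition pup (b : R) := (1 - delta) * b / (1 + b).
Definition pstay (b : R) := (1 - delta + delta * b) / (1 + b).
Definition pdown (b : R) := delta / (1 + b).

Lemma W_S x b z : W delta x.+1 b z =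
  if z == x.+2 then pup b else if z == x.+1 then pstay b
  else if z == x then pdown b else 0.
Proof. by []. Qed.

Lemma W_0 b z : W delta 0 b z =
  if z == 1%N then pup b else if z == 0%N then 1 - pup b else 0.
Proof. by []. Qed.

Lemma W_above x b z : (x.+2 <= z)%N -> W delta x b z = 0.
Proof.
by case: x => [|x] h; rewrite ?W_S ?W_0 !ifN_eq //; apply/eqP => E; lia.
Qed.

Lemma W_below x b z : (z.+2 <= x)%N -> W delta x b z = 0.
Proof. by case: x => [|x] h //; rewrite W_S !ifN_eq //; apply/eqP => E; lia. Qed.

Lemma W_succ x b : W delta x b x.+1 = pup b.
Proof. by case: x => [|x]; rewrite ?W_S ?W_0 ?eqxx. Qed.

Lemma W_pred x b : W delta x.+1 b x = pdown b.
Proof. by rewrite W_S ltn_eqF // ltn_eqF // eqxx. Qed.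

Lemma W_diagS x b : W delta x.+1 b x.+1 = pstay b.
Proof. by rewrite W_S ltn_eqF // eqxx. Qed.

Lemma W_diag0 b : W delta 0 b 0 = 1 - pup b.
Proof. by []. Qed.

Section Action.
Variable b : R.
Hypothesis hb : abar <= b <= 1.
Let abar_le_b : abar <= b. Proof. by case/andP: hb. Qed.
Let b_le1 : b <= 1. Proof. by case/andP: hb. Qed.
Let b_gt0 : 0 < b. Proof. exact: lt_le_trans abar_gt0 abar_le_b. Qed.
Let b1_gt0 : 0 < 1 + b. Proof. exact: addr_gt0 ltr01 b_gt0. Qed.

Lemma pstayE : pstay b = 1 - pup b - pdown b.
Proof. by rewrite /pup /pstay /pdown; field; apply/lt0r_neq0. Qed.

Lemma pup_gt0 : 0 < pup b.
Proof. by rewrite /pup divr_gt0 ?mulr_gt0 // subr_gt0. Qed.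

Lemma pdown_gt0 : 0 < pdown b.
Proof. exact: divr_gt0 delta_gt0 b1_gt0. Qed.

Lemma pstay_gt0 : 0 < pstay b.
Proof. by rewrite /pstay divr_gt0 // addr_gt0 ?subr_gt0 ?mulr_gt0 ?delta_gt0. Qed.

Lemma pup_le : pup b <= (1 - delta) / 2.
Proof.
rewrite /pup ler_pdivrMr // mulrAC ler_pdivlMr //.
by have := delta_lt1; have := b_le1; nra.
Qed.

Lemma pup_ge : (1 - delta) * abar / 2 <= pup b.
Proof.
rewrite /pup ler_pdivlMr // mulrAC ler_pdivrMr // -!mulrA ler_wpM2l ?subr_ge0 ?ltW //.
by have := abar_le_b; have := abar_lt1; have := b_gt0; nra.
Qed.

Lemma pup_lt1 : pup b < 1.
Proof. by have := pup_le; have := delta_gt0; lra. Qed.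

Lemma pdown_ge : delta / 2 <= pdown b.
Proof.
rewrite /pdown ler_pdivlMr // mulrAC ler_pdivrMr //.
by have := b_le1; have := delta_gt0; nra.
Qed.

Lemma pdown_le1 : pdown b <= 1.
Proof.
by rewrite /pdown ler_pdivrMr //; have := delta_lt1; have := b_gt0; lra.
Qed.

Lemma pdown_sub_pup_ge : (2 * delta - 1) / 2 <= pdown b - pup b.
Proof.
have -> : pdown b - pup b = (delta - (1 - delta) * b) / (1 + b).
  by rewrite /pup /pdown; field; apply/lt0r_neq0.
rewrite ler_pdivlMr // mulrAC ler_pdivrMr //.
by have := delta_lt1; have := b_le1; have := b_gt0; nra.
Qed.

End Action.

Lemma W_ge0 x b z : abar <= b <= 1 -> 0 <= W delta x b z.
Proof.
move=> hb; have := pup_gt0 hb; have := pdown_gt0 hb; have := pstay_gt0 hb.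
have := pup_lt1 hb.
by case: x => [|x]; rewrite ?W_S ?W_0; repeat case: ifP => _; lra.
Qed.

Lemma W_row0 (F : nat -> R) b :
  \sum_(z < 2) W delta 0 b z * F z = (1 - pup b) * F 0%N + pup b * F 1%N.
Proof.
rewrite -(big_mkord xpredT (fun z => W delta 0 b z * F z)).
by rewrite !big_nat_recr //= big_geq // add0r W_diag0 W_succ.
Qed.

Lemma W_rowS (F : nat -> R) x b :
  \sum_(z < x.+3) W delta x.+1 b z * F z =
    pdown b * F x + pstay b * F x.+1 + pup b * F x.+2.
Proof.
rewrite -(big_mkord xpredT (fun z => W delta x.+1 b z * F z)).
rewrite !big_nat_recr //= big_nat_cond big1 ?add0r; last first.
  by move=> i /andP[/andP[_ hi] _]; rewrite W_below ?mul0r //; lia.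
by rewrite W_pred W_diagS W_succ.
Qed.

Lemma W_col0 (s a : nat -> R) :
  \sum_(x < 2) s x * W delta x (a x) 0 =
    s 0%N * (1 - pup (a 0%N)) + s 1%N * pdown (a 1%N).
Proof.
rewrite -(big_mkord xpredT (fun z => s z * W delta z (a z) 0)).
by rewrite !big_nat_recr //= big_geq // add0r W_diag0 W_pred.
Qed.

Lemma W_colS (s a : nat -> R) y :
  \sum_(x < y.+3) s x * W delta x (a x) y.+1 =
    s y * pup (a y) + s y.+1 * pstay (a y.+1) + s y.+2 * pdown (a y.+2).
Proof.
rewrite -(big_mkord xpredT (fun z => s z * W delta z (a z) y.+1)).
rewrite !big_nat_recr //= big_nat_cond big1 ?add0r; last first.
  by move=> i /andP[/andP[_ hi] _]; rewrite W_above ?mulr0 //; lia.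
by rewrite W_succ W_diagS W_pred.
Qed.

Definition rho := (1 - delta) / delta.

Lemma rho_ge0 : 0 <= rho.
Proof. by rewrite /rho divr_ge0 ?subr_ge0 ?ltW ?delta_gt0. Qed.

Lemma rho_lt1 : rho < 1.
Proof.
by rewrite /rho ltr_pdivrMr ?delta_gt0 //; have := delta_gt_half; lra.
Qed.

Lemma pup_div_pdown_le b b' : abar <= b <= 1 -> abar <= b' <= 1 ->
  pup b / pdown b' <= rho.
Proof.
move=> hb hb'; rewrite ler_pdivrMr ?pdown_gt0 //.
apply: le_trans (pup_le hb) _.
have -> : (1 - delta) / 2 = rho * (delta / 2).
  by rewrite /rho; field; apply/lt0r_neq0/delta_gt0.
by rewrite ler_wpM2l ?rho_ge0 ?pdown_ge.
Qed.

Section Chain.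
Variable a : nat -> R.
Hypothesis ha : forall x, abar <= a x <= 1.
Let P : nat -> nat -> R := fun x y => W delta x (a x) y.

Lemma P_ge0 x y : 0 <= P x y. Proof. exact: W_ge0. Qed.
Lemma P_above x y : (x.+2 <= y)%N -> P x y = 0. Proof. exact: W_above. Qed.
Lemma P_succ_gt0 x : 0 < P x x.+1. Proof. by rewrite /P W_succ pup_gt0. Qed.
Lemma P_pred_gt0 x : 0 < P x.+1 x. Proof. by rewrite /P W_pred pdown_gt0. Qed.

Lemma P_diag_gt0 x : 0 < P x x.
Proof.
case: x => [|x]; rewrite /P ?W_diag0 ?W_diagS ?pstay_gt0 //.
by rewrite subr_gt0 pup_lt1.
Qed.

Lemma P_row0 (F : nat -> R) :
  \sum_(z < 2) P 0 z * F z = (1 - pup (a 0%N)) * F 0%N + pup (a 0%N) * F 1%N.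
Proof. exact: W_row0. Qed.

Lemma P_rowS (F : nat -> R) x :
  \sum_(z < x.+3) P x.+1 z * F z =
    pdown (a x.+1) * F x + pstay (a x.+1) * F x.+1 + pup (a x.+1) * F x.+2.
Proof. exact: W_rowS. Qed.

Lemma P_row_sum x : \sum_(z < x.+2) P x z = 1.
Proof.
transitivity (\sum_(z < x.+2) P x z * (fun=> 1) z).
  by apply: eq_bigr => i _; rewrite mulr1.
case: x => [|x]; first by rewrite (P_row0 (fun=> 1)) !mulr1 subrK.
by rewrite (P_rowS (fun=> 1)) !mulr1 (pstayE (ha x.+1)); lra.
Qed.

Section Irreducibility.
Local Open Scope ereal_scope.

Lemma nstep_ge0 n x y : 0 <= nstep P n x y.
Proof.
elim: n x y => [|n IH] x y /=; first by case: eqP.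
by apply: nneseries_ge0 => i _ _; rewrite mule_ge0 ?lee_fin ?P_ge0.
Qed.

Lemma nstepS_ge n x y z : (P x z)%:E * nstep P n z y <= nstep P n.+1 x y.
Proof.
have term_ge0 i : 0 <= (P x i)%:E * nstep P n i y.
  by rewrite mule_ge0 ?lee_fin ?P_ge0 ?nstep_ge0.
apply: le_trans (nneseries_lim_ge z.+1 (fun i _ _ => term_ge0 i)).
by rewrite big_nat_recr //= leeDr // sume_ge0.
Qed.

Lemma nstepS_gt0 n x y z :
  0 < nstep P n z y -> (0 < P x z)%R -> 0 < nstep P n.+1 x y.
Proof.
move=> h1 h2; apply: lt_le_trans (nstepS_ge n x y z).
by rewrite mule_gt0 ?lte_fin.
Qed.

Lemma irreducible_P : irreducible P.
Proof.
have down d x : 0 < nstep P d (x + d) x.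
  elim: d => [|d IH]; first by rewrite addn0 /= eqxx lte_fin.
  by apply: (nstepS_gt0 (z := (x + d)%N)); rewrite // addnS P_pred_gt0.
have up d x : 0 < nstep P d x (x + d).
  elim: d x => [|d IH] x; first by rewrite addn0 /= eqxx lte_fin.
  by apply: (nstepS_gt0 (z := x.+1)); rewrite ?P_succ_gt0 // addnS -addSn.
move=> x y; case: (leqP x y) => h.
  by exists (y - x)%N; rewrite -{2}(subnKC h).
by exists (x - y)%N; rewrite -{2}(subnKC (ltnW h)).
Qed.

Lemma aperiodic_P : aperiodic P.
Proof.
move=> x d hdvd; apply/eqP; rewrite -dvdn1; apply: hdvd => //.
by apply: (nstepS_gt0 (z := x)); rewrite ?P_diag_gt0 //= eqxx lte_fin.
Qed.

End Irreducibility.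

(* [taboo y n x] is the probability that the chain started at [x] avoids [y]
   at times [1, ..., n]; [first_passage y n x] is the real-valued [fpass]. *)
Fixpoint taboo (y n x : nat) {struct n} : R :=
  if n is n'.+1 then \sum_(z < x.+2 | (z : nat) != y) P x z * taboo y n' z else 1.

Fixpoint first_passage (y n x : nat) {struct n} : R :=
  match n with
  | 0 => 0
  | n'.+1 => if n' is 0 then P x y
             else \sum_(z < x.+2 | (z : nat) != y) P x z * first_passage y n' z
  end.

Lemma taboo_ge0 y n x : 0 <= taboo y n x.
Proof.
elim: n x => [|n IH] x //=.
by apply: sumr_ge0 => i _; rewrite mulr_ge0 ?P_ge0.
Qed.

Lemma first_passage_ge0 y n x : 0 <= first_passage y n x.
Proof.
elim: n x => [|n IH] x //; case: n IH => [|n] IH; first exact: P_ge0.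
by apply: sumr_ge0 => i _; rewrite mulr_ge0 ?P_ge0 ?IH.
Qed.

Lemma first_passage_taboo y n x :
  first_passage y n.+1 x + taboo y n.+1 x = taboo y n x.
Proof.
elim: n x => [|n IH] x.
  rewrite /=; under eq_bigr do rewrite mulr1.
  by rewrite -[RHS](P_row_sum x) (@bigD1_ord_nat _ (P x) _ y) // => /P_above.
rewrite [first_passage _ _ _]/= [taboo y n.+2 x]/= -big_split /=.
by apply: eq_bigr => z _; rewrite -mulrDr IH.
Qed.

Lemma taboo_decr y m n x : (m <= n)%N -> taboo y n x <= taboo y m x.
Proof.
elim: n => [|n IH] mn; first by have -> : m = 0%N by lia.
have [->//|ne] := eqVneq m n.+1.
apply: le_trans (IH _); last by lia.
by have := first_passage_taboo y n x; have := first_passage_ge0 y n.+1 x; lra.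
Qed.

Lemma sum_first_passage y N :
  \sum_(1 <= n < N.+1) first_passage y n y = 1 - taboo y N y.
Proof.
elim: N => [|N IH]; first by rewrite big_geq // subrr.
by have := first_passage_taboo y N y; rewrite big_nat_recr //= IH; lra.
Qed.

(* The expected hitting time of [y] from [x], truncated at [N]. *)
Definition taboo_sum y N x := \sum_(0 <= n < N) taboo y n x.

Lemma taboo_sumS y N x :
  taboo_sum y N.+1 x = 1 + \sum_(z < x.+2 | (z : nat) != y) P x z * taboo_sum y N z.
Proof.
rewrite /taboo_sum big_nat_recl //=; congr (_ + _).
by rewrite exchange_big /=; apply: eq_bigr => z _; rewrite mulr_sumr.
Qed.

Lemma sum_first_passage_time y N :
  \sum_(1 <= n < N.+1) n%:R * first_passage y n y + N%:R * taboo y N y =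
  taboo_sum y N y.
Proof.
rewrite /taboo_sum; elim: N => [|N IH]; first by rewrite !big_geq // mul0r addr0.
rewrite big_nat_recr //= [in RHS]big_nat_recr //= -addrA -mulrDr.
rewrite first_passage_taboo -IH -[N.+1]addn1 natrD mulrDl mul1r; lra.
Qed.

Section Lyapunov.
Variable y : nat.

Definition pup_min := (1 - delta) * abar / 2.
Definition lyap_base := 2 / pup_min.
Definition lyap_slope := 2 / (2 * delta - 1).

(* Geometric below [y] and linear above it, with the constants chosen so that the
   drift is at most [-1] off [y]: below [y] this uses [pup >= pup_min], above it
   [pdown - pup >= delta - 1/2]. *)
Definition lyap x :=
  if (x <= y)%N then \sum_(x <= j < y) lyap_base ^+ j.+1
  else lyap_slope * (x%:R - y%:R).

Lemma pup_min_gt0 : 0 < pup_min.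
Proof. by rewrite /pup_min divr_gt0 ?mulr_gt0 // subr_gt0. Qed.

Lemma lyap_base_ge1 : 1 <= lyap_base.
Proof.
have := pup_min_gt0 => hp.
rewrite /lyap_base ler_pdivlMr // mul1r /pup_min ler_pdivrMr //.
by have := delta_gt_half; have := abar_lt1; have := abar_gt0; nra.
Qed.

Lemma pup_mul_lyap_base x : 2 <= pup (a x) * lyap_base.
Proof.
have hp := pup_min_gt0; have := pup_ge (ha x); rewrite -/pup_min => h.
by rewrite /lyap_base mulrA ler_pdivlMr //; nra.
Qed.

Lemma lyap_slope_gt0 : 0 < lyap_slope.
Proof. by rewrite /lyap_slope divr_gt0 //; have := delta_gt_half; lra. Qed.

Lemma lyap_slope_drift x : 1 <= lyap_slope * (pdown (a x) - pup (a x)).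
Proof.
have h0 : 0 < 2 * delta - 1 by have := delta_gt_half; lra.
have -> : 1 = lyap_slope * ((2 * delta - 1) / 2).
  by rewrite /lyap_slope; field; apply/lt0r_neq0.
by apply: ler_wpM2l; [exact: ltW lyap_slope_gt0 | exact: pdown_sub_pup_ge].
Qed.

Lemma lyap_ge0 x : 0 <= lyap x.
Proof.
rewrite /lyap; case: ifP => h.
  by apply: sumr_ge0 => i _; rewrite exprn_ge0 // (le_trans ler01 lyap_base_ge1).
apply: mulr_ge0; first exact: ltW lyap_slope_gt0.
by rewrite subr_ge0 ler_nat; move/negbT: h; lia.
Qed.

Lemma lyap_target : lyap y = 0.
Proof. by rewrite /lyap leqnn big_geq. Qed.

Lemma lyap_lt x : (x < y)%N -> lyap x = lyap_base ^+ x.+1 + lyap x.+1.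
Proof. by move=> h; rewrite /lyap h (ltnW h) big_ltn. Qed.

Lemma lyap_ge x : (y <= x)%N -> lyap x = lyap_slope * (x%:R - y%:R).
Proof.
move=> h; have [->|ne] := eqVneq x y; first by rewrite lyap_target subrr mulr0.
by rewrite /lyap ifF //; apply/negbTE; lia.
Qed.

Lemma lyap_drift_below x : (x < y)%N ->
  \sum_(z < x.+2) P x z * lyap z <= lyap x - 1.
Proof.
case: x => [|x] h.
  rewrite P_row0 (lyap_lt h) expr1.
  have := pup_mul_lyap_base 0; have := lyap_ge0 1; have := pup_lt1 (ha 0); nra.
rewrite P_rowS (lyap_lt (ltnW h)) (lyap_lt h) (exprSr lyap_base x.+1).
rewrite (pstayE (ha x.+1)); set G := lyap_base ^+ x.+1.
have G_ge1 : 1 <= G by rewrite exprn_ege1 ?lyap_base_ge1.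
have up : 2 * G <= pup (a x.+1) * lyap_base * G.
  by rewrite ler_wpM2r ?pup_mul_lyap_base //; lra.
have down : pdown (a x.+1) * G <= G.
  by rewrite ler_piMl ?pdown_le1 //; lra.
nra.
Qed.

Lemma lyap_drift_above x : (y < x)%N ->
  \sum_(z < x.+2) P x z * lyap z <= lyap x - 1.
Proof.
case: x => [|x] h; first by [].
rewrite P_rowS !lyap_ge; try lia.
have := lyap_slope_drift x.+1; rewrite (pstayE (ha x.+1)).
rewrite -[x.+2]addn2 -[x.+1]addn1 !natrD; nra.
Qed.

Lemma lyap_drift x : x != y -> \sum_(z < x.+2) P x z * lyap z <= lyap x - 1.
Proof.
by rewrite neq_ltn => /orP[/lyap_drift_below|/lyap_drift_above].
Qed.

Lemma taboo_sum_le_lyap N x : x != y -> taboo_sum y N x <= lyap x.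
Proof.
elim: N x => [|N IH] x ne; first by rewrite /taboo_sum big_geq // lyap_ge0.
have := lyap_drift ne; rewrite taboo_sumS (@bigD1_ord_nat _ (fun z => P x z * lyap z) _ y);
  last by rewrite lyap_target mulr0.
rewrite lyap_target mulr0 add0r.
suff : \sum_(z < x.+2 | (z : nat) != y) P x z * taboo_sum y N z <=
       \sum_(z < x.+2 | (z : nat) != y) P x z * lyap z by lra.
by apply: ler_sum => i hi; rewrite ler_wpM2l ?P_ge0 ?IH.
Qed.

Definition return_bound := 1 + \sum_(z < y.+2) P y z * lyap z.

Lemma return_bound_ge1 : 1 <= return_bound.
Proof.
by rewrite /return_bound lerDl sumr_ge0 // => i _; rewrite mulr_ge0 ?P_ge0 ?lyap_ge0.
Qed.

Lemma taboo_sum_target_le N : taboo_sum y N y <= return_bound.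
Proof.
case: N => [|N]; first by rewrite /taboo_sum big_geq // (le_trans ler01 return_bound_ge1).
rewrite taboo_sumS /return_bound lerD2l (@bigD1_ord_nat _ (fun z => P y z * lyap z) _ y);
  last by rewrite lyap_target mulr0.
rewrite lyap_target mulr0 add0r.
by apply: ler_sum => i hi; rewrite ler_wpM2l ?P_ge0 ?taboo_sum_le_lyap.
Qed.

Lemma taboo_target_le N : N.+1%:R * taboo y N y <= return_bound.
Proof.
apply: le_trans (taboo_sum_target_le N.+1).
rewrite -[N.+1 in X in X <= _](subn0 N.+1) mulr_natl -sumr_const_nat.
by apply: ler_sum_nat => i hi; apply: taboo_decr; lia.
Qed.

End Lyapunov.

Section PositiveRecurrence.
Local Open Scope ereal_scope.

Lemma fpassE n x y : fpass P n x y = (first_passage y n x)%:E.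
Proof.
elim: n x => [|[|n] IH] x //.
transitivity (\sum_(z <oo | z != y) ((P x z)%:E * fpass P n.+1 z y)); first by [].
under eq_eseriesr do rewrite IH -EFinM.
rewrite (@eseries_cond_trunc _ _ _ _ x.+2) //; last first.
  by move=> i hi _; rewrite P_above // mul0r.
by rewrite sumEFin big_mkord.
Qed.

Lemma return_prob_le1 y : \sum_(1 <= n <oo) (first_passage y n y)%:E <= 1.
Proof.
apply: nneseries_cond_le => [n _ _|[|N]]; rewrite ?lee_fin ?first_passage_ge0 //.
  by rewrite big_geq.
by rewrite sumEFin lee_fin sum_first_passage; have := taboo_ge0 y N y; lra.
Qed.

(* The chain avoids [y] for [N] steps with probability [O(1 / N)]. *)
Lemma return_prob_eq1 y : \sum_(1 <= n <oo) (first_passage y n y)%:E = 1.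
Proof.
set S := \sum_(1 <= n <oo) _.
have S_ge0 : 0 <= S by apply: nneseries_ge0 => n _ _; rewrite lee_fin first_passage_ge0.
have S_fin : S \is a fin_num.
  by rewrite ge0_fin_numE // (le_lt_trans (return_prob_le1 y)) // ltey.
apply/eqP; rewrite eq_le return_prob_le1 /= -(fineK S_fin) lee_fin.
apply: (ge1_of_ge_1_sub_divn (B := return_bound y)) => N.
rewrite -lee_fin fineK //; apply: le_trans (nneseries_lim_ge N.+1 _); last first.
  by move=> n _ _; rewrite lee_fin first_passage_ge0.
rewrite sumEFin sum_first_passage lee_fin lerD2l lerN2.
by rewrite ler_pdivlMr ?ltr0n // mulrC taboo_target_le.
Qed.

Lemma mean_return_time_le y :
  \sum_(1 <= n <oo) (n%:R * first_passage y n y)%:E <= (return_bound y)%:E.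
Proof.
apply: nneseries_cond_le => [n _ _|[|N]].
- by rewrite lee_fin mulr_ge0 ?first_passage_ge0.
- by rewrite big_geq // lee_fin (le_trans ler01 (return_bound_ge1 y)).
rewrite sumEFin lee_fin; apply: le_trans (taboo_sum_target_le y N).
by rewrite -(sum_first_passage_time y N) lerDl mulr_ge0 ?taboo_ge0.
Qed.

Lemma positive_recurrent_P : positive_recurrent P.
Proof.
move=> y; split.
  by under eq_eseriesr do rewrite fpassE; exact: return_prob_eq1.
under eq_eseriesr do rewrite fpassE -EFinM.
exact: le_lt_trans (mean_return_time_le y) (ltey _).
Qed.

End PositiveRecurrence.

Section InvariantDistribution.

Definition balanced (s : nat -> R) :=
  forall y, s y.+1 * pdown (a y.+1) = s y * pup (a y).

Lemma invariant_col (s : nat -> R) y :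
  (\sum_(x <oo) (s x * P x y)%:E = (s y)%:E)%E <->
  \sum_(x < y.+2) s x * P x y = s y.
Proof.
rewrite (@eseries_cond_trunc _ _ _ _ y.+2) //; last first.
  by move=> i hi _; rewrite /P W_below // mulr0.
by rewrite sumEFin big_mkord; split => [|->] //; apply: EFin_inj.
Qed.

Lemma balanced_col (s : nat -> R) :
  balanced s -> forall y, \sum_(x < y.+2) s x * P x y = s y.
Proof.
move=> hs [|y]; first by rewrite (W_col0 s a); have := hs 0%N; lra.
rewrite (W_colS s a) -(hs y) (pstayE (ha y.+1)).
by have := hs y.+1; lra.
Qed.

Lemma col_balanced (s : nat -> R) :
  (forall y, \sum_(x < y.+2) s x * P x y = s y) -> balanced s.
Proof.
move=> hc; elim=> [|y IH]; first by have := hc 0%N; rewrite (W_col0 s a); lra.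
have := hc y.+1; rewrite (W_colS s a) (pstayE (ha y.+1)); lra.
Qed.

Fixpoint balance_weight x :=
  if x is x'.+1 then balance_weight x' * pup (a x') / pdown (a x) else 1.

Lemma balance_weightS x :
  balance_weight x.+1 = balance_weight x * pup (a x) / pdown (a x.+1).
Proof. by []. Qed.

Lemma balance_weight_gt0 x : 0 < balance_weight x.
Proof.
elim: x => // x IH.
by rewrite balance_weightS divr_gt0 ?(pdown_gt0 (ha _)) // mulr_gt0 ?(pup_gt0 (ha _)).
Qed.

Lemma balanced_weight : balanced balance_weight.
Proof. by move=> x; rewrite balance_weightS divfK // lt0r_neq0 ?(pdown_gt0 (ha _)). Qed.

Lemma balance_weight_le x : balance_weight x <= rho ^+ x.
Proof.
elim: x => [|x IH]; first by rewrite expr0.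
rewrite balance_weightS -mulrA exprSr ler_pM ?(ltW (balance_weight_gt0 x)) ?pup_div_pdown_le ?ha //.
by rewrite divr_ge0 // ltW ?(pup_gt0 (ha _)) ?(pdown_gt0 (ha _)).
Qed.

Lemma balance_weight_summable :
  (\sum_(x <oo) (balance_weight x)%:E \is a fin_num)%E.
Proof.
have [C hC] := geometric_moment_bounded 0 rho_ge0 rho_lt1.
rewrite ge0_fin_numE; last first.
  by apply: nneseries_ge0 => n _ _; rewrite lee_fin ltW ?balance_weight_gt0.
apply: (@le_lt_trans _ _ C%:E); last by rewrite ltey.
apply: nneseries_cond_le => [n _ _|N]; first by rewrite lee_fin ltW ?balance_weight_gt0.
rewrite sumEFin lee_fin; apply: le_trans (hC N).
by apply: ler_sum_nat => i _; rewrite expr0 mul1r balance_weight_le.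
Qed.

Definition balance_mass := fine (\sum_(x <oo) (balance_weight x)%:E).

Lemma balance_massE : (\sum_(x <oo) (balance_weight x)%:E = balance_mass%:E)%E.
Proof. by rewrite fineK // balance_weight_summable. Qed.

Lemma balance_mass_gt0 : 0 < balance_mass.
Proof.
rewrite -lte_fin -balance_massE; apply: lt_le_trans (nneseries_lim_ge 1 _).
  by rewrite big_nat1 lte_fin.
by move=> n _ _; rewrite lee_fin ltW ?balance_weight_gt0.
Qed.

Definition stationary x := balance_weight x / balance_mass.

Lemma invariant_stationary : invariant_distribution P stationary.
Proof.
have hZ := balance_mass_gt0.
split; first by move=> x; rewrite /stationary divr_ge0 // ltW ?balance_weight_gt0.
split => [|y]; last first.
  apply/invariant_col/balanced_col => z.
  by rewrite /stationary mulrAC balanced_weight mulrAC.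
transitivity (\sum_(x <oo) ((balance_mass^-1)%:E * (balance_weight x)%:E))%E.
  by apply: eq_eseriesr => n _; rewrite -EFinM mulrC.
rewrite nneseriesZl; last by move=> n _; rewrite lee_fin ltW ?balance_weight_gt0.
by rewrite balance_massE -EFinM mulVf // lt0r_neq0.
Qed.

Lemma invariant_eq_stationary (s : nat -> R) :
  invariant_distribution P s -> s = stationary.
Proof.
move=> [_ [s_mass s_inv]].
have hb : balanced s by apply: col_balanced => y; apply/invariant_col.
have s_prop x : s x = s 0%N * balance_weight x.
  elim: x => [|x IH]; first by rewrite mulr1.
  apply: (mulIf (lt0r_neq0 (pdown_gt0 (ha x.+1)))).
  by rewrite hb IH -[RHS]mulrA balanced_weight [RHS]mulrA.
have s0_mass : s 0%N * balance_mass = 1.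
  apply: EFin_inj; rewrite EFinM -balance_massE -s_mass -nneseriesZl; last first.
    by move=> n _; rewrite lee_fin ltW ?balance_weight_gt0.
  by apply: eq_eseriesr => n _; rewrite -EFinM -s_prop.
apply/funext => x; rewrite s_prop /stationary mulrC; congr (_ * _).
have mass_neq0 := lt0r_neq0 balance_mass_gt0.
by apply: (mulIf mass_neq0); rewrite s0_mass mulVf.
Qed.

Lemma unique_invariant_P : unique_invariant_distribution P.
Proof.
by exists stationary; split; [exact: invariant_stationary | move=> s /invariant_eq_stationary].
Qed.

Lemma invariant_le_rho (s : nat -> R) : invariant_distribution P s ->
  forall x, 0 <= s x <= rho ^+ x.
Proof.
move=> /invariant_eq_stationary -> x; have hZ := balance_mass_gt0.
rewrite /stationary divr_ge0 ?(ltW (balance_weight_gt0 x)) ?(ltW hZ) //=.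
apply: le_trans (balance_weight_le x); rewrite ler_pdivrMr //.
rewrite ler_pMr ?balance_weight_gt0 // -lee_fin -balance_massE.
apply: le_trans (nneseries_lim_ge 1 _); first by rewrite big_nat1.
by move=> n _ _; rewrite lee_fin ltW ?balance_weight_gt0.
Qed.

End InvariantDistribution.

End Chain.

Lemma moment_invariant_bounded q : exists C, forall a : nat -> R,
  (forall x, abar <= a x <= 1) ->
  forall s, invariant_distribution (fun x y => W delta x (a x) y) s ->
  (\sum_(x <oo) (x%:R ^+ q * s x)%:E <= C%:E)%E.
Proof.
have [C hC] := geometric_moment_bounded q rho_ge0 rho_lt1.
exists C => a ha s hs.
by apply: nneseries_le_geometric hC => [x|]; [rewrite exprn_ge0 | exact: invariant_le_rho].
Qed.

Lemma Mfun_invariant_bounded (Ck pk : R) (k : nat -> R) :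
  0 <= Ck -> 0 <= pk -> (forall x, 0 <= k x) ->
  (forall x, k x <= Ck * x%:R `^ pk) ->
  exists B, 0 <= B /\ forall a : nat -> R, (forall x, abar <= a x <= 1) ->
    forall s, invariant_distribution (fun x y => W delta x (a x) y) s ->
    (Mfun k s <= B%:E)%E.
Proof.
move=> Ck_ge0 pk_ge0 k_ge0 k_le.
pose n := (Num.truncn pk).+1.
have pk_le_n : pk <= n%:R by rewrite ltW // truncnS_gt.
have [C0 hC0] := geometric_moment_bounded 0 rho_ge0 rho_lt1.
have [Cn hCn] := geometric_moment_bounded n rho_ge0 rho_lt1.
have C0_ge0 : 0 <= C0 by apply: le_trans (hC0 0%N); rewrite big_geq.
have Cn_ge0 : 0 <= Cn by apply: le_trans (hCn 0%N); rewrite big_geq.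
exists (Ck * (C0 + Cn)); split => [|a ha s hs]; first by rewrite mulr_ge0 ?addr_ge0.
apply: nneseries_le_geometric (invariant_le_rho ha hs) _ => // N.
apply: le_trans (_ : \sum_(0 <= x < N) Ck * (x%:R ^+ 0 * rho ^+ x + x%:R ^+ n * rho ^+ x) <= _).
  apply: ler_sum_nat => x _; rewrite -mulrDl expr0 mulrA ler_wpM2r ?exprn_ge0 ?rho_ge0 //.
  by apply: le_trans (k_le x) _; rewrite ler_wpM2l ?natr_powR_le_1_add_expr.
by rewrite -mulr_sumr big_split ler_wpM2l ?lerD.
Qed.

End Model.

Theorem mainTheorem6 (R : realType) (delta abar Ck pk : R) (k : nat -> R)
  (hdelta : 1 / 2 < delta < 1) (habar : 0 < abar < 1)
  (hCk : 0 < Ck) (hpk : 0 <= pk)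
  (hk0 : forall x, 0 <= k x)
  (hkinc : forall x y : nat, (x <= y)%N -> k x <= k y)
  (hkbd : forall x, k x <= Ck * (x%:R `^ pk)) :
  (* Part 1 *)
  (forall (g : nat -> R -> R) (m : R),
      (forall x, abar <= g x m <= 1) ->
      irreducible (Pol delta g m) /\ aperiodic (Pol delta g m) /\
      positive_recurrent (Pol delta g m) /\
      unique_invariant_distribution (Pol delta g m)) /\
  (forall q : nat, exists C : R, forall (g : nat -> R -> R) (m : R) (s : nat -> R),
      (forall x, abar <= g x m <= 1) ->
      invariant_distribution (Pol delta g m) s ->
      (\sum_(x <oo) ((x%:R ^+ q * s x)%:E) <= C%:E)%E) /\
  (* Part 2 (a = 0, d(x,y) = |x - y|, x0 = 0, p = 2) *)
  (exists b : R, 0 < b /\ exists C : R,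
     forall g : nat -> R -> R, (forall x m, abar <= g x m <= 1) ->
       (forall m, 0 <= m <= b -> unique_invariant_distribution (Pol delta g m)) /\
       (forall s, invariant_distribution (Pol delta g 0) s -> (0 <= Mfun k s)%E) /\
       (forall s, invariant_distribution (Pol delta g b) s -> (Mfun k s <= b%:E)%E) /\
       (forall m s, 0 <= m <= b -> invariant_distribution (Pol delta g m) s ->
          (\sum_(x <oo) ((x%:R ^+ 2 * s x)%:E) <= C%:E)%E)).
Proof.
case/andP: hdelta => d1 d2; case/andP: habar => a1 a2.
split.
  move=> g m hg; split; first exact: irreducible_P hg.
  split; first exact: aperiodic_P hg.
  by split; [exact: positive_recurrent_P hg | exact: unique_invariant_P hg].
split.
  move=> q; have [C hC] := moment_invariant_bounded d1 d2 a1 a2 q.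
  by exists C => g m s hg; apply: hC.
have [B [B_ge0 hB]] := Mfun_invariant_bounded d1 d2 a1 a2 (ltW hCk) hpk hk0 hkbd.
have [C2 hC2] := moment_invariant_bounded d1 d2 a1 a2 2.
exists (1 + B); split; first by lra.
exists C2 => g hg; split; first by move=> m _; exact: unique_invariant_P (hg ^~ m).
split; first by move=> s [s_ge0 _]; apply: nneseries_ge0 => x _ _; rewrite lee_fin mulr_ge0.
split=> [s hs|m s _ hs]; last exact: (hC2 (g ^~ m)).
by apply: le_trans (hB (g ^~ (1 + B)) (hg ^~ _) s hs) _; rewrite lee_fin lerDr.
Qed.
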